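(* Let $G$ be an edge-maximal $K_{3,3}$-minor free graph of order $n\geq 1186$ with $\Delta(G)=n-1$ and $\Delta'(G)\leq n-2$. Then $q(G)\leq n+2$.
   Context: All graphs are finite, simple and undirected. $q(G)$ is the largest eigenvalue of the signless Laplacian matrix $Q(G)=D(G)+A(G)$. $\Delta(G)$ is the maximum degree of $G$, and $\Delta'(G)$ is the second largest degree: $\Delta'(G)=\max\{d(u): u\in V(G)\setminus\{v\}\}$ where $v$ is a vertex with $d(v)=\Delta(G)$. A graph $H$ is a minor of $G$ if $H$ can be obtained from $G$ by deleting edges, contracting edges, or deleting vertices; $G$ is $H$-minor free if it has no minor isomorphic to $H$. $G$ is edge-maximal $H$-minor free if $G$ is $H$-minor free and adding any edge joining two nonadjacent vertices of $G$ produces a graph having $H$ as a minor. $K_{3,3}$ is the complete bipartite graph with both parts of size 3. *)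

From HB Require Import structures.
From mathcomp Require Import all_boot all_order all_algebra.
From mathcomp Require Import classical_sets reals.
Set Implicit Arguments. Unset Strict Implicit. Unset Printing Implicit Defensive.
Import Order.TTheory GRing.Theory Num.Theory.

Record graph := Graph { gn : nat; gadj : rel 'I_gn }.
Arguments gadj : clear implicits.

Definition simple_graph (G : graph) :=
  symmetric (gadj G) /\ irreflexive (gadj G).

Definition graph_iso (G H : graph) : Prop :=
  exists f : 'I_(gn G) -> 'I_(gn H),
    bijective f /\ forall x y, gadj H (f x) (f y) = gadj G x y.

(* One elementary minor operation: delete an edge, delete a vertex,
   or contract an edge (merging v into u, keeping the graph simple). *)
Inductive minor_step : graph -> graph -> Prop :=
| MS_del_edge (G : graph) (u v : 'I_(gn G)) :
    gadj G u v ->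
    minor_step G (@Graph (gn G)
      (fun x y => gadj G x y && ~~ ([&& x == u & y == v] || [&& x == v & y == u])))
| MS_del_vertex (G : graph) (v : 'I_(gn G)) :
    minor_step G (@Graph (gn G).-1 (fun x y => gadj G (lift v x) (lift v y)))
| MS_contract (G : graph) (u v : 'I_(gn G)) :
    u != v -> gadj G u v ->
    minor_step G (@Graph (gn G).-1 (fun x y =>
      (x != y) &&
      [|| gadj G (lift v x) (lift v y),
          (lift v x == u) && gadj G v (lift v y)
        | (lift v y == u) && gadj G v (lift v x)])).

Inductive minor_of (G : graph) : graph -> Prop :=
| MO_refl : minor_of G G
| MO_step (G' G'' : graph) : minor_of G G' -> minor_step G' G'' -> minor_of G G''.

Definition has_minor (G H : graph) : Prop :=
  exists G', minor_of G G' /\ graph_iso G' H.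

Definition K33 : graph :=
  @Graph 6 (fun x y => (x < 3)%N != (y < 3)%N).

Definition add_edge (G : graph) (u v : 'I_(gn G)) : graph :=
  @Graph (gn G) (fun x y =>
    gadj G x y || [&& x == u & y == v] || [&& x == v & y == u]).

Definition K33_minor_free (G : graph) : Prop := ~ has_minor G K33.

Definition edge_maximal_K33_minor_free (G : graph) : Prop :=
  K33_minor_free G /\
  forall u v : 'I_(gn G), u != v -> ~~ gadj G u v ->
    has_minor (add_edge u v) K33.

Definition deg n (e : rel 'I_n) (v : 'I_n) : nat := #|[pred u | e v u]|.
Definition Delta n (e : rel 'I_n) : nat := \max_(v : 'I_n) deg e v.

Definition signless_laplacian (R : realType) n (e : rel 'I_n) : 'M[R]_n :=
  (\matrix_(i, j) (if i == j then (deg e i)%:R else (e i j)%:R))%R.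

Definition q_index (R : realType) n (e : rel 'I_n) : R :=
  sup [set a : R | eigenvalue (signless_laplacian R e) a].

From HB Require Import structures.
From mathcomp Require Import all_boot all_order all_algebra.
From mathcomp Require Import classical_sets reals.
From mathcomp Require Import boolp ring lra zify.
Set Implicit Arguments. Unset Strict Implicit. Unset Printing Implicit Defensive.
Import Order.TTheory GRing.Theory Num.Theory.

(* Let v be the vertex of degree n - 1.  If two other vertices u, w had four common
   neighbours, then v, u, w and three of their common neighbours other than v would
   span a K_{3,3}; so two vertices other than v share at most three neighbours.  Double
   counting turns this into degree estimates: d(u) + d(w) <= n + 3, the neighbours of
   u have total degree at most 2 d(u) + 3 (n - 2), and 37 sum_{u <> v} d(u) is at most
   (n - 1)(2n + 395).
   The bound on q(G) is of Collatz-Wielandt type: a positive vector x with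
   Q x <= (n + 2) x entrywise forces q(G) <= n + 2.  Take x_v = 1, x_w = 7/10 for a
   vertex w <> v of maximum degree, and otherwise
     x_i = (51/50 + 7/10 [i ~ w] + c (d(i) - 1)) / (n + 2 - d(i)),  c = 51 / (25 (n - 3)).
   The row inequality at i <> v, w then reduces to a bound on the sum of x over the
   neighbours of i, which the degree estimates provide once n >= 1186. *)

(** * Minors *)

Lemma minor_of_trans G1 G2 G3 : minor_of G1 G2 -> minor_of G2 G3 -> minor_of G1 G3.
Proof. by move=> m12; elim=> // G' G'' _ m1' st; apply: MO_step st. Qed.

Lemma has_minor_step G G' H : minor_step G G' -> has_minor G' H -> has_minor G H.
Proof.
move=> st [G'' [m iso]]; exists G''; split=> //.
by apply: minor_of_trans m; apply: MO_step (MO_refl G) st.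
Qed.

Section SubgraphMinor.

Variable H : graph.
Hypothesis H_sym : symmetric (gadj H).

Definition adj_preserving G (f : 'I_(gn H) -> 'I_(gn G)) :=
  forall i j, gadj H i j -> gadj G (f i) (f j).

Definition edge_set G := [set p : 'I_(gn G) * 'I_(gn G) | gadj G p.1 p.2].

Lemma has_minor_spanning_subgraph G (f : 'I_(gn H) -> 'I_(gn G)) :
  bijective f -> adj_preserving f -> has_minor G H.
Proof.
suff: forall k G (f : 'I_(gn H) -> 'I_(gn G)),
    (#|edge_set G| <= k)%N -> bijective f -> adj_preserving f -> has_minor G H.
  by move/(_ _ G f (leqnn _)).
elim=> [|k IH] {}G {}f + [g fK gK] f_adj.
  rewrite leqn0 => /eqP/card0_eq noedge.
  have {}noedge x y : gadj G x y = false by have := noedge (x, y); rewrite inE.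
  exists G; split; first exact: MO_refl.
  exists g; split; first by exists f.
  by move=> x y; rewrite noedge; apply/negbTE/negP => /f_adj; rewrite !gK noedge.
move=> Ek.
have [[x y] /andP[/= Exy NHxy] | extra_free] :=
  pickP [pred p : 'I_(gn G) * 'I_(gn G) | gadj G p.1 p.2 && ~~ gadj H (g p.1) (g p.2)].
  apply: (has_minor_step (MS_del_edge Exy)); apply: (IH (Graph _) f); last 2 first.
  - by exists g.
  - move=> i j Hij /=; rewrite f_adj //=.
    apply/negP => /orP[] /andP[/eqP fi_x /eqP fjy]; move: NHxy.
      by rewrite -fi_x -fjy !fK Hij.
    by rewrite -fi_x -fjy !fK H_sym Hij.
  rewrite -ltnS (leq_trans _ Ek) // proper_card //; apply/properP; split.
    by apply/fintype.subsetP => -[a b]; rewrite !inE => /andP[].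
  by exists (x, y); rewrite !inE /= ?Exy // !eqxx.
exists G; split; first exact: MO_refl.
exists g; split; first by exists f.
move=> x y; apply/idP/idP => [/f_adj | Exy]; first by rewrite !gK.
by apply: contraFT (extra_free (x, y)) => /= NH; rewrite Exy.
Qed.

Lemma has_minor_subgraph G (f : 'I_(gn H) -> 'I_(gn G)) :
  injective f -> adj_preserving f -> has_minor G H.
Proof.
suff: forall k G (f : 'I_(gn H) -> 'I_(gn G)),
    (gn G <= k + gn H)%N -> injective f -> adj_preserving f -> has_minor G H.
  by move/(_ (gn G) G f); apply; rewrite leq_addr.
elim=> [|k IH] {}G {}f Gk f_inj f_adj.
all: have [/forallP onto | ] := boolP [forall z, z \in codom f].
1,3: apply: (has_minor_spanning_subgraph _ f_adj);
  by exists (fun z => iinv (onto z)) => [i|z]; [apply: f_inj; rewrite f_iinv | exact: f_iinv].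
all: rewrite negb_forall => /existsP [z z_out].
  suff: (#|codom f| < #|'I_(gn G)|)%N by rewrite card_codom // !card_ord; lia.
  by apply: proper_card; apply/properP; split; [apply/fintype.subsetP | exists z].
have lift_f i : exists j, lift z j = f i.
  have /unlift_some[j -> _] : z != f i by apply: contraNneq z_out => ->; apply: codom_f.
  by exists j.
have [f' f'E] := fin_all_exists lift_f.
apply: (has_minor_step (MS_del_vertex z)); apply: (IH (Graph _) f') => /=.
- by move: Gk; lia.
- by move=> i j /(congr1 (lift z)); rewrite !f'E => /f_inj.
- by move=> i j Hij /=; rewrite !f'E f_adj.
Qed.

End SubgraphMinor.

Lemma K33_sym : symmetric (gadj K33).
Proof. by move=> x y; rewrite /= eq_sym. Qed.

Lemma has_K33_minor G (A B : seq 'I_(gn G)) :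
  symmetric (gadj G) -> size A = 3 -> size B = 3 -> uniq (A ++ B) ->
  {in A & B, forall a b, gadj G a b} -> has_minor G K33.
Proof.
move=> G_sym sA sB uAB AB.
have [x0 _] : exists x0, x0 \in A by case: A sA {uAB AB} => // a A _; exists a; rewrite mem_head.
have sAB : size (A ++ B) = 6 by rewrite size_cat sA sB.
have side i : (i < 6)%N -> if (i < 3)%N then nth x0 (A ++ B) i \in A else nth x0 (A ++ B) i \in B.
  move=> i6; rewrite nth_cat sA; case: ltnP => i3; apply: mem_nth; rewrite ?sA ?sB; lia.
apply: (@has_minor_subgraph K33 K33_sym G (fun i => nth x0 (A ++ B) i)).
  by move=> i j /eqP; rewrite nth_uniq ?sAB // => /eqP/val_inj.
move=> [i i6] [j j6] /=; have := side i i6; have := side j j6.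
by case: ltnP => _; case: ltnP => _ //= Xj Xi _; [rewrite G_sym |]; apply: AB.
Qed.

(** * Graphs with a dominating vertex *)

Definition common_nbrs n (e : rel 'I_n) (u w : 'I_n) := [set z | e u z && e w z].

Lemma card_neq n (v : 'I_n) : #|[pred u | u != v]| = n.-1.
Proof. by rewrite cardC1 card_ord. Qed.

Lemma card_neq2 n (u v : 'I_n) : u != v -> #|[pred z | (z != u) && (z != v)]| = n - 2.
Proof.
move=> uv; have := card_neq u; rewrite (cardD1 v) !inE eq_sym uv.
have -> : #|[predD1 [pred z | z != u] & v]| = #|[pred z | (z != u) && (z != v)]|.
  by apply: eq_card => z; rewrite !inE andbC.
lia.
Qed.

Lemma adj_of_deg_predn n (e : rel 'I_n) v : irreflexive e -> deg e v = n.-1 ->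
  forall u, u != v -> e v u.
Proof.
move=> e_irr dv u uv.
have sub : [pred y | e v y] \subset [pred y | y != v].
  by apply/fintype.subsetP => y; rewrite !inE; apply: contraTneq => ->; rewrite e_irr.
by have := subset_cardP (etrans dv (esym (card_neq v))) sub u; rewrite !inE uv.
Qed.

Section DominatingVertex.

Variables (n : nat) (e : rel 'I_n) (v : 'I_n).
Hypotheses (e_sym : symmetric e) (e_irr : irreflexive e).
Hypothesis v_dom : forall u, u != v -> e v u.

Lemma K33_free_common_nbrs u w : K33_minor_free (Graph e) ->
  u != v -> w != v -> u != w -> (#|common_nbrs e u w| <= 3)%N.
Proof.
move=> K33_free uv wv uw; rewrite leqNgt; apply/negP => big.
have : (2 < #|common_nbrs e u w :\ v|)%N.
  by move: big; rewrite (cardsD1 v); case: (_ \in _) => /=; lia.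
case/card_gt2P => a [b [c [[+ + +] [ab bc ca]]]].
rewrite !inE => /andP[av /andP[ua wa]] /andP[bv /andP[ub wb]] /andP[cv /andP[uc wc]].
apply: K33_free; apply: (@has_K33_minor (Graph e) [:: v; u; w] [:: a; b; c]) => //.
  have ne x y : e x y -> x != y by apply: contraTneq => ->; rewrite e_irr.
  rewrite /= !inE !negb_or eq_sym uv eq_sym wv uw ab bc (eq_sym a c) ca.
  by rewrite !(eq_sym v) av bv cv !ne.
by move=> x y; rewrite !inE => /or3P[]/eqP-> /or3P[]/eqP->; rewrite //= v_dom.
Qed.

Lemma deg_dom : deg e v = n.-1.
Proof.
rewrite -(card_neq v); apply: eq_card => u; rewrite !inE.
by have [->|/v_dom] := eqVneq u v; rewrite ?e_irr.
Qed.

Lemma deg_gt0 u : u != v -> (0 < deg e u)%N.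
Proof. by move=> uv; apply/card_gt0P; exists v; rewrite inE e_sym v_dom. Qed.

Lemma card_nbrsD1 u : u != v -> #|[pred y | e u y && (y != v)]| = (deg e u).-1.
Proof.
move=> uv; rewrite /deg (cardD1 v [pred y | e u y]) !inE e_sym v_dom //.
by apply: eq_card => y; rewrite !inE andbC.
Qed.

Hypothesis codeg : forall u w, u != v -> w != v -> u != w -> (#|common_nbrs e u w| <= 3)%N.

Lemma deg_add_le u w : u != v -> w != v -> u != w -> (deg e u + deg e w <= n + 3)%N.
Proof.
move=> uv wv uw; rewrite /deg -cardUI.
have -> : #|[predI [pred y | e u y] & [pred y | e w y]]| = #|common_nbrs e u w|.
  by apply: eq_card => z; rewrite !inE.
by apply: leq_add (codeg uv wv uw); apply: leq_trans (max_card _) _; rewrite card_ord.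
Qed.

Lemma deg_as_sum u : deg e u = (\sum_z e u z)%N.
Proof.
by rewrite /deg -sum1_card big_mkcond; apply: eq_bigr => z _; rewrite inE; case: (e u z).
Qed.

Lemma sum_deg_nbrs u : u != v ->
  (\sum_(y | e u y) deg e y <= 2 * deg e u + 3 * (n - 2))%N.
Proof.
move=> uv.
have -> : (\sum_(y | e u y) deg e y = \sum_z #|common_nbrs e u z|)%N.
  rewrite (eq_bigr (fun y => \sum_z e y z)%N) => [|y _]; last exact: deg_as_sum.
  rewrite exchange_big; apply: eq_bigr => z _.
  rewrite -sum1_card big_mkcond [RHS]big_mkcond; apply: eq_bigr => y _.
  by rewrite /common_nbrs inE (e_sym y); case: (e u y); case: (e z y).
rewrite (bigD1 u) // (bigD1 v) 1?eq_sym //=.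
have -> : #|common_nbrs e u u| = deg e u by apply: eq_card => y; rewrite !inE andbb.
have uv_le : (#|common_nbrs e u v| <= deg e u)%N.
  by apply: subset_leq_card; apply/fintype.subsetP => y; rewrite !inE => /andP[].
have rest : (\sum_(z | (z != u) && (z != v)) #|common_nbrs e u z| <= 3 * (n - 2))%N.
  apply: leq_trans (_ : \sum_(z | (z != u) && (z != v)) 3 <= _)%N.
    by apply: leq_sum => z /andP[zu zv]; apply: codeg; rewrite // eq_sym.
  by rewrite sum_nat_const mulnC leq_mul2l /= (card_neq2 uv).
by apply: leq_trans (leq_add (leqnn _) (leq_add uv_le rest)) _; lia.
Qed.

Lemma sum_deg_sq : (\sum_u deg e u * deg e u = \sum_u \sum_(y | e u y) deg e y)%N.
Proof.
have inner u : (\sum_(y | e u y) deg e y = \sum_y e u y * deg e y)%N.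
  by rewrite big_mkcond; apply: eq_bigr => y _; case: (e u y); rewrite ?mul1n.
rewrite [RHS](eq_bigr _ (fun u _ => inner u)) exchange_big; apply: eq_bigr => y _.
by rewrite -big_distrl {1}deg_as_sum; congr (_ * _)%N; apply: eq_bigr => u _; rewrite e_sym.
Qed.

Lemma sum_deg_le_quadratic : (37 * \sum_(u | u != v) deg e u <= n.-1 * (2 * n + 395))%N.
Proof.
set T := (\sum_(u | u != v) deg e u)%N.
have nbrs_v : (\sum_(y | e v y) deg e y = T)%N.
  by apply: eq_bigl => y; have [->|/v_dom] := eqVneq y v; rewrite ?e_irr.
have sq_le : (\sum_u deg e u * deg e u <= T + \sum_(u | u != v) (2 * deg e u + 3 * (n - 2)))%N.
  by rewrite sum_deg_sq (bigD1 v) //= nbrs_v leq_add2l; apply: leq_sum => u; apply: sum_deg_nbrs.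
rewrite big_split /= -big_distrr /= sum_nat_const card_neq -/T (bigD1 v) //= deg_dom in sq_le.
have lin_le : (\sum_(u | u != v) 40 * deg e u <= \sum_(u | u != v) (deg e u * deg e u + 400))%N.
  by apply: leq_sum => u _; case: (leqP (deg e u) 20) => ?; nia.
rewrite -big_distrr /= big_split /= sum_nat_const card_neq -/T in lin_le.
nia.
Qed.

End DominatingVertex.

(** * The spectral bound *)

Local Open Scope ring_scope.

Section Constants.

Variable R : realFieldType.
Implicit Types N h d T : R.

Definition base_num : R := 51 / 50.
Definition wt_w : R := 7 / 10.
Definition slope N : R := 2 * base_num / (N - 3).
Definition kappa N : R := 2 * base_num / ((N + 1) * (N + 1)) + 2 * slope N / (N + 1).

Lemma base_num_gt0 : 0 < base_num. Proof. by rewrite /base_num; lra. Qed.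
Lemma wt_w_gt0 : 0 < wt_w. Proof. by rewrite /wt_w; lra. Qed.

Lemma slope_ge0 N : 1186 <= N -> 0 <= slope N.
Proof. by move=> HN; rewrite /slope /base_num; apply: divr_ge0; lra. Qed.

Lemma kappa_ge0 N : 1186 <= N -> 0 <= kappa N.
Proof.
move=> HN; have := slope_ge0 HN; rewrite /kappa /base_num => s0.
by apply: addr_ge0; apply: divr_ge0; nra.
Qed.

Lemma other_row_ineq N h : 1186 <= N -> 0 <= h ->
  1 + 2 / (N + 1) * (base_num * h + 2 * wt_w + slope N * (2 * h + 2 * N - 3))
    <= base_num + slope N * h.
Proof.
move=> HN h0; rewrite -subr_ge0 /slope /base_num /wt_w.
have N3 : N - 3 != 0 by rewrite gt_eqF //; lra.
have N1 : N + 1 != 0 by rewrite gt_eqF //; lra.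
have -> : 51 / 50 + 2 * (51 / 50) / (N - 3) * h -
   (1 + 2 / (N + 1) * (51 / 50 * h + 2 * (7 / 10) +
     2 * (51 / 50) / (N - 3) * (2 * h + 2 * N - 3)))
   = (N * N - 550 * N + 1029) / (50 * (N + 1) * (N - 3)) :> R.
  by field; rewrite N3 N1.
apply: divr_ge0; nra.
Qed.

Lemma max_row_ineq N d : 1186 <= N -> 1 <= d -> d <= N - 2 ->
  1 + (base_num + wt_w) + 2 * slope N / (N + 1) * (2 * d + 2 * N - 5) <= (N + 2 - d) * wt_w.
Proof.
move=> HN d1 d2.
have s0 := slope_ge0 HN.
have k0 : 0 <= 2 * slope N / (N + 1) by apply: divr_ge0; lra.
apply: (@le_trans _ _ (1 + (base_num + wt_w) + 2 * slope N / (N + 1) * (4 * N - 9))).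
  by rewrite lerD2l; apply: ler_wpM2l => //; lra.
apply: (@le_trans _ _ (4 * wt_w)); last by rewrite ler_wpM2r /wt_w; lra.
rewrite -subr_ge0 /slope /base_num /wt_w.
have N3 : N - 3 != 0 by rewrite gt_eqF //; lra.
have N1 : N + 1 != 0 by rewrite gt_eqF //; lra.
have -> : 4 * (7 / 10) - (1 + (51 / 50 + 7 / 10) +
   2 * (2 * (51 / 50) / (N - 3)) / (N + 1) * (4 * N - 9))
   = (4 * N * N - 824 * N + 1824) / (50 * (N + 1) * (N - 3)) :> R.
  by field; rewrite N3 N1.
apply: divr_ge0; nra.
Qed.

Lemma entry_le_linear N h : 1186 <= N -> 0 <= h -> 2 * h <= N + 1 ->
  (base_num + slope N * h) / (N + 1 - h) <= base_num / (N + 1) + kappa N * h.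
Proof.
move=> HN h0 h1.
have D0 : 0 < N + 1 - h by lra.
have N1 : N + 1 != 0 by rewrite gt_eqF //; lra.
have s0 := slope_ge0 HN; have a0 := base_num_gt0.
rewrite /kappa (mulrDl base_num) (mulrDl (2 * base_num / _)) addrA.
apply: lerD; rewrite ler_pdivrMr // -subr_ge0.
  have -> : (base_num / (N + 1) + 2 * base_num / ((N + 1) * (N + 1)) * h) * (N + 1 - h) - base_num
     = base_num * h * (N + 1 - 2 * h) / ((N + 1) * (N + 1)) by field.
  by apply: divr_ge0; [apply: mulr_ge0; [apply: mulr_ge0|] | apply: mulr_ge0]; lra.
have -> : 2 * slope N / (N + 1) * h * (N + 1 - h) - slope N * h
   = slope N * h * (N + 1 - 2 * h) / (N + 1) by field.
by apply: divr_ge0; [apply: mulr_ge0; [apply: mulr_ge0|] |]; lra.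
Qed.

Lemma dom_row_ineq N T : 1186 <= N -> 0 <= T ->
  37 * T <= (N - 1) * (2 * N + 395) ->
  2 * wt_w + (N - 2) * (base_num / (N + 1)) + kappa N * T <= 3.
Proof.
move=> HN T0 HT.
have N3 : N - 3 != 0 by rewrite gt_eqF //; lra.
have N1 : N + 1 != 0 by rewrite gt_eqF //; lra.
have k1 : kappa N <= 6 * base_num / ((N - 3) * (N + 1)).
  rewrite /kappa /slope -subr_ge0.
  have -> : 6 * base_num / ((N - 3) * (N + 1)) -
     (2 * base_num / ((N + 1) * (N + 1)) + 2 * (2 * base_num / (N - 3)) / (N + 1))
     = 8 * base_num / ((N - 3) * (N + 1) * (N + 1)) by field; rewrite N3 N1.
  by have a0 := base_num_gt0; apply: divr_ge0; nra.
apply: (@le_trans _ _ (2 * wt_w + (N - 2) * (base_num / (N + 1)) +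
     6 * base_num / ((N - 3) * (N + 1)) * ((N - 1) * (2 * N + 395) / 37))).
  rewrite lerD2l; apply: le_trans (_ : _ <= 6 * base_num / ((N - 3) * (N + 1)) * T) _.
    by apply: ler_wpM2r.
  apply: ler_wpM2l; first exact: le_trans (kappa_ge0 HN) k1.
  by rewrite ler_pdivlMr; lra.
rewrite -subr_ge0 /base_num /wt_w.
have -> : 3 - (2 * (7 / 10) + (N - 2) * (51 / 50 / (N + 1)) +
      6 * (51 / 50) / ((N - 3) * (N + 1)) * ((N - 1) * (2 * N + 395) / 37))
  = ((3 - 2 * (7 / 10)) * 37 * 50 * (N - 3) * (N + 1)
      - (N - 2) * 51 * 37 * (N - 3) - 6 * 51 * (N - 1) * (2 * N + 395))
     / (37 * 50 * (N - 3) * (N + 1)) :> R.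
  by field; rewrite N3 N1.
apply: divr_ge0; nra.
Qed.

End Constants.

Arguments base_num {R}.
Arguments wt_w {R}.
Arguments slope {R}.
Arguments kappa {R}.

(* [eigenvalue M a] is witnessed by a row vector, [u *m M = a *: u], hence column sums. *)
Lemma eigenvalue_le_colsum (F : realFieldType) n (M : 'M[F]_n) (x : 'I_n -> F) (c a : F) :
  (forall i j, 0 <= M i j) -> (forall j, 0 < x j) ->
  (forall j, \sum_i M i j * x i <= c * x j) -> eigenvalue M a -> a <= c.
Proof.
move=> M_ge0 x_gt0 colsum /eigenvalueP [u uM u_neq0].
have [j1 uj1] : exists j, u 0 j != 0.
  apply/existsP; apply: contraNT u_neq0; rewrite negb_exists => /forallP u0.
  by apply/eqP/rowP => j; rewrite mxE; apply/eqP; rewrite -[_ == _]negbK u0.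
pose r j := `|u 0 j| / x j.
have [j _ r_max] := @Order.TotalTheory.arg_maxP _ F _ j1 xpredT r isT.
have r_gt0 : 0 < r j by apply: lt_le_trans (r_max j1 isT); rewrite divr_gt0 ?normr_gt0.
have uj : `|u 0 j| = r j * x j by rewrite /r divfK // gt_eqF.
have uj_gt0 : 0 < `|u 0 j| by rewrite uj mulr_gt0.
have eig : a * u 0 j = \sum_i u 0 i * M i j.
  by have := congr1 (fun m : 'rV[F]_n => m 0 j) uM; rewrite !mxE => <-.
suff : `|a| * `|u 0 j| <= c * `|u 0 j| by rewrite ler_pM2r // => /(le_trans (ler_norm a)).
rewrite -normrM eig; apply: le_trans (ler_norm_sum _ _ _) _.
apply: le_trans (_ : \sum_i r j * (M i j * x i) <= _).
  apply: ler_sum => i _; rewrite normrM (ger0_norm (M_ge0 i j)) mulrCA mulrC ler_wpM2l //.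
  by have := r_max i isT; rewrite /= {1}/r ler_pdivrMr.
by rewrite -mulr_sumr uj mulrCA ler_wpM2l // ltW.
Qed.

(* The hypothesis [0 <= c] covers the empty set, since [sup set0 = 0]. *)
Lemma sup_le_of_ub (R : realType) (E : set R) (c : R) :
  0 <= c -> (forall a, E a -> a <= c) -> sup E <= c.
Proof.
move=> c_ge0 ub; have [[a Ea] | noE] := pselect (exists a, E a).
  by apply: ge_sup => //; exists a.
suff -> : E = set0 by rewrite sup0.
by rewrite predeqE => a; split=> // Ea; apply: noE; exists a.
Qed.

Lemma signless_laplacian_colsum (R : realType) n (e : rel 'I_n) (x : 'I_n -> R) j :
  symmetric e -> irreflexive e ->
  \sum_i signless_laplacian R e i j * x i = (deg e j)%:R * x j + \sum_(i | e j i) x i.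
Proof.
move=> e_sym e_irr; rewrite (bigD1 j) //= mxE eqxx; congr (_ + _).
rewrite [RHS]big_mkcond [LHS]big_mkcond /=; apply: eq_bigr => i _.
rewrite mxE; have [->|ij] /= := eqVneq i j; first by rewrite e_irr.
by rewrite e_sym; case: (e j i); rewrite ?mul1r ?mul0r.
Qed.

Lemma ler_sum_subpred (R : numDomainType) (I : finType) (P Q : pred I) (F : I -> R) :
  (forall i, P i -> Q i) -> (forall i, Q i -> 0 <= F i) ->
  \sum_(i | P i) F i <= \sum_(i | Q i) F i.
Proof.
move=> PQ F_ge0; rewrite [leLHS]big_mkcond [leRHS]big_mkcond /=.
apply: ler_sum => i _; case: (boolP (P i)) => [/PQ -> // | _].
by case: (boolP (Q i)) => // /F_ge0.
Qed.

Lemma sum_split_at (R : nmodType) (I : finType) (P : pred I) (F : I -> R) k :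
  \sum_(i | P i) F i = (if P k then F k else 0) + \sum_(i | P i && (i != k)) F i.
Proof.
case: (boolP (P k)) => Pk; first by rewrite (bigD1 k).
by rewrite add0r; apply: eq_bigl => i; have [->|] := eqVneq i k; rewrite ?andbT ?(negbTE Pk).
Qed.

Section TestVector.

Variable R : realType.
Variables (n : nat) (e : rel 'I_n) (v w : 'I_n).
Hypotheses (e_sym : symmetric e) (e_irr : irreflexive e).
Hypothesis v_dom : forall u, u != v -> e v u.
Hypothesis codeg :
  forall u u', u != v -> u' != v -> u != u' -> (#|common_nbrs e u u'| <= 3)%N.
Hypothesis n_large : (1186 <= n)%N.
Hypothesis w_neq_v : w != v.
Hypothesis w_max : forall u, u != v -> (deg e u <= deg e w)%N.
Hypothesis w_deg : (deg e w <= n - 2)%N.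

Local Notation N := (n%:R : R).
Local Notation d i := ((deg e i)%:R : R).
Local Notation adj_w i := ((e i w)%:R : R).

Definition entry_num i := base_num + wt_w * adj_w i + slope N * (d i - 1).

Definition test_vector i : R :=
  if i == v then 1 else if i == w then wt_w else entry_num i / (N + 2 - d i).

Lemma N_large : 1186 <= N.
Proof. by rewrite ler_nat. Qed.

Lemma natr_predn : n.-1%:R = N - 1 :> R.
Proof. by rewrite -subn1 natrB // (leq_trans _ n_large). Qed.

Lemma natr_subn2 : (n - 2)%:R = N - 2 :> R.
Proof. by rewrite natrB // (leq_trans _ n_large). Qed.

Lemma deg_other_bounds i : i != v -> i != w ->
  [/\ 1 <= d i, 2 * d i <= N + 3 & d i + d w <= N + 3].
Proof.
move=> iv iw; have d1 : 1 <= d i by rewrite ler1n (deg_gt0 e_sym v_dom iv).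
have dw : d i <= d w by rewrite ler_nat w_max.
have : ((deg e i + deg e w)%:R <= (n + 3)%:R :> R).
  by rewrite ler_nat (deg_add_le codeg iv w_neq_v iw).
by rewrite !natrD => ?; split=> //; lra.
Qed.

Lemma entry_num_gt0 i : i != v -> 0 < entry_num i.
Proof.
move=> iv; have d1 : 1 <= d i by rewrite ler1n (deg_gt0 e_sym v_dom iv).
have s0 := slope_ge0 N_large; have g0 := wt_w_gt0 R; have a0 := base_num_gt0 R.
have : 0 <= wt_w * adj_w i by rewrite mulr_ge0 ?ler0n // ltW.
have : 0 <= slope N * (d i - 1) by rewrite mulr_ge0 // subr_ge0.
by rewrite /entry_num; lra.
Qed.

Lemma test_vector_other i : i != v -> i != w -> test_vector i = entry_num i / (N + 2 - d i).
Proof. by move=> iv iw; rewrite /test_vector (negbTE iv) (negbTE iw). Qed.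

Lemma test_vector_gt0 i : 0 < test_vector i.
Proof.
rewrite /test_vector; have [_|iv] := eqVneq i v; first exact: ltr01.
have [_|iw] := eqVneq i w; first exact: wt_w_gt0.
have [d1 d2 _] := deg_other_bounds iv iw.
have NL := N_large; apply: divr_gt0; [exact: entry_num_gt0 | lra].
Qed.

Lemma inv_denom_le i : i != v -> i != w -> (N + 2 - d i)^-1 <= 2 / (N + 1).
Proof.
move=> iv iw; have [_ d2 _] := deg_other_bounds iv iw; have NL := N_large.
by rewrite -div1r ler_pdivrMr 1?mulrAC ?ler_pdivlMr //; lra.
Qed.

Lemma test_vector_le_half i : i != v -> i != w ->
  test_vector i <= 2 / (N + 1) * entry_num i.
Proof.
move=> iv iw; rewrite test_vector_other // mulrC.
by apply: ler_wpM2r; [exact/ltW/entry_num_gt0 | exact: inv_denom_le].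
Qed.

Lemma test_vector_le_linear i : i != v -> i != w ->
  test_vector i <= base_num / (N + 1) + kappa N * (d i - 1) + wt_w * adj_w i / (N + 2 - d i).
Proof.
move=> iv iw; have [d1 d2 _] := deg_other_bounds iv iw; have NL := N_large.
have -> : test_vector i = (base_num + slope N * (d i - 1)) / (N + 1 - (d i - 1))
                          + wt_w * adj_w i / (N + 2 - d i).
  by rewrite test_vector_other // /entry_num; field; lra.
by rewrite lerD2r entry_le_linear ?N_large //; lra.
Qed.

Lemma sum_nbrs_split j (F : 'I_n -> R) : j != v ->
  \sum_(i | e j i) F i = F v + \sum_(i | e j i && (i != v)) F i.
Proof. by move=> jv; rewrite (bigD1 v) // e_sym v_dom. Qed.

Lemma sum_nbrsD1_1 j : j != v -> \sum_(i | e j i && (i != v)) (1 : R) = d j - 1.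
Proof.
by move=> jv; rewrite sumr_const card_nbrsD1 // -subn1 natrB ?(deg_gt0 e_sym v_dom jv).
Qed.

Lemma sum_nbrsD1_deg j : j != v -> \sum_(i | e j i && (i != v)) d i <= 2 * d j + 2 * N - 5.
Proof.
move=> jv; have := sum_deg_nbrs e_sym codeg jv.
rewrite (bigD1 v) /=; last by rewrite e_sym v_dom.
rewrite (deg_dom e_irr v_dom) -(ler_nat R) natrD natr_sum.
by rewrite natr_predn natrD !natrM natr_subn2; lra.
Qed.

Lemma sum_nbrsD1_adj_w j : j != v -> j != w -> \sum_(i | e j i && (i != v)) adj_w i <= 2.
Proof.
move=> jv jw; rewrite -natr_sum ler_nat.
have <- : #|common_nbrs e j w :\ v| = (\sum_(i | e j i && (i != v)) e i w)%N.
  rewrite -sum1_card big_mkcond [RHS]big_mkcond; apply: eq_bigr => i _.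
  by rewrite !inE andbC (e_sym i w); case: (e j i); case: (i != v); case: (e w i).
have := codeg jv w_neq_v jw; rewrite (cardsD1 v) !inE (e_sym j) (e_sym w) !v_dom //.
Qed.

Lemma sum_entry_num_nbrs j : j != v -> j != w ->
  \sum_(i | e j i && (i != v) && (i != w)) entry_num i
    <= base_num * (d j - 1) + 2 * wt_w + slope N * (2 * (d j - 1) + 2 * N - 3).
Proof.
move=> jv jw.
apply: le_trans (ler_sum_subpred (Q := fun i => e j i && (i != v)) _ _) _.
- by move=> i /andP[].
- by move=> i /andP[_ /entry_num_gt0/ltW].
have -> : \sum_(i | e j i && (i != v)) entry_num i = base_num * (d j - 1)
    + wt_w * \sum_(i | e j i && (i != v)) adj_w i
    + slope N * \sum_(i | e j i && (i != v)) (d i - 1).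
  by rewrite -sum_nbrsD1_1 // !mulr_sumr -!big_split; apply: eq_bigr => i _; rewrite mulr1.
rewrite -[leLHS]addrA -[leRHS]addrA lerD2l; apply: lerD.
  by rewrite mulrC ler_pM2r ?wt_w_gt0 ?sum_nbrsD1_adj_w.
apply: ler_wpM2l; first exact: slope_ge0 N_large.
apply: le_trans (_ : _ <= \sum_(i | e j i && (i != v)) d i) _.
  by apply: ler_sum => i _; lra.
by have := sum_nbrsD1_deg jv; lra.
Qed.

Lemma test_vector_v : test_vector v = 1.
Proof. by rewrite /test_vector eqxx. Qed.

Lemma test_vector_w : test_vector w = wt_w.
Proof. by rewrite /test_vector (negbTE w_neq_v) eqxx. Qed.

Lemma row_other j : j != v -> j != w ->
  \sum_(i | e j i && (i != v)) test_vector i <= entry_num j - 1.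
Proof.
move=> jv jw; rewrite (sum_split_at _ _ w) /= w_neq_v andbT test_vector_w.
have -> : (if e j w then wt_w else 0) = wt_w * adj_w j :> R.
  by case: (e j w); rewrite ?mulr1 ?mulr0.
apply: le_trans (_ : _ <= wt_w * adj_w j +
    2 / (N + 1) * \sum_(i | e j i && (i != v) && (i != w)) entry_num i) _.
  rewrite lerD2l mulr_sumr; apply: ler_sum => i /andP[/andP[_ iv] iw].
  exact: test_vector_le_half.
have NL := N_large; have d1 : 1 <= d j by rewrite ler1n (deg_gt0 e_sym v_dom jv).
have := other_row_ineq NL (_ : 0 <= d j - 1); rewrite subr_ge0 => /(_ d1).
have : 2 / (N + 1) * \sum_(i | e j i && (i != v) && (i != w)) entry_num i <=
    2 / (N + 1) * (base_num * (d j - 1) + 2 * wt_w + slope N * (2 * (d j - 1) + 2 * N - 3)).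
  by apply: ler_wpM2l; [apply: divr_ge0; lra | exact: sum_entry_num_nbrs].
by rewrite /entry_num; lra.
Qed.

Lemma sum_inv_denom_nbrs_w : \sum_(i | e w i && (i != v)) (N + 2 - d i)^-1 <= 1.
Proof.
have [dw1 | dw2] := leqP (deg e w) 1.
  have /card0_eq P0 : #|[pred i | e w i && (i != v)]| = 0%N.
    by rewrite card_nbrsD1 //; lia.
  by rewrite big_pred0 ?ler01 // => i; have := P0 i; rewrite !inE.
have NL := N_large; have dw1 : 2 <= d w by rewrite ler_nat.
apply: le_trans (_ : _ <= \sum_(i | e w i && (i != v)) (d w - 1)^-1) _.
  apply: ler_sum => i /andP[ewi iv].
  have iw : i != w by apply: contraTneq ewi => ->; rewrite e_irr.
  have [_ _ dsum] := deg_other_bounds iv iw.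
  by rewrite lef_pV2 ?posrE; lra.
rewrite -[X in \sum_(_ | _) X]mulr1 -mulr_sumr sum_nbrsD1_1 // mulVf //.
by rewrite gt_eqF //; lra.
Qed.

Lemma row_max : \sum_(i | e w i && (i != v)) test_vector i <= (N + 2 - d w) * wt_w - 1.
Proof.
have NL := N_large; have s0 := slope_ge0 NL; have a0 := base_num_gt0 R; have g0 := wt_w_gt0 R.
apply: le_trans (_ : _ <= (base_num + wt_w) * \sum_(i | e w i && (i != v)) (N + 2 - d i)^-1
    + 2 * slope N / (N + 1) * \sum_(i | e w i && (i != v)) (d i - 1)) _.
  rewrite !mulr_sumr -big_split; apply: ler_sum => i /andP[ewi iv].
  have iw : i != w by apply: contraTneq ewi => ->; rewrite e_irr.
  have [d1 _ _] := deg_other_bounds iv iw.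
  rewrite test_vector_other // /entry_num (e_sym i w) ewi mulr1 mulrDl lerD2l.
  have -> : 2 * slope N / (N + 1) * (d i - 1) = slope N * (d i - 1) * (2 / (N + 1)) by ring.
  by apply: ler_wpM2l; [apply: mulr_ge0; lra | exact: inv_denom_le].
have d1 : 1 <= d w by rewrite ler1n (deg_gt0 e_sym v_dom w_neq_v).
have d2 : d w <= N - 2 by rewrite -natr_subn2 ler_nat.
have := max_row_ineq NL d1 d2.
have : (base_num + wt_w) * \sum_(i | e w i && (i != v)) (N + 2 - d i)^-1 <= base_num + wt_w.
  by rewrite -[leRHS]mulr1; apply: ler_wpM2l; [lra | exact: sum_inv_denom_nbrs_w].
have : 2 * slope N / (N + 1) * \sum_(i | e w i && (i != v)) (d i - 1)
    <= 2 * slope N / (N + 1) * (2 * d w + 2 * N - 5).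
  apply: ler_wpM2l; first by apply: divr_ge0; lra.
  apply: le_trans (_ : _ <= \sum_(i | e w i && (i != v)) d i) _; last exact: sum_nbrsD1_deg.
  by apply: ler_sum => i _; lra.
lra.
Qed.

Lemma sum_adj_w_inv_denom :
  \sum_(i | (i != v) && (i != w)) adj_w i * (N + 2 - d i)^-1
    <= \sum_(i | e w i && (i != v)) (N + 2 - d i)^-1.
Proof.
rewrite [leLHS]big_mkcond [leRHS]big_mkcond; apply: ler_sum => i _ /=.
have [->|iv] /= := eqVneq i v; first by rewrite andbF.
have [->|iw] /= := eqVneq i w; first by rewrite e_irr.
by rewrite andbT e_sym; case: (e w i); rewrite ?mul1r ?mul0r.
Qed.

Lemma row_dom : \sum_(i | i != v) test_vector i <= 3.
Proof.
have NL := N_large; have g0 := wt_w_gt0 R; have k0 := kappa_ge0 NL.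
set T := \sum_(i | i != v) d i.
rewrite (sum_split_at _ _ w) w_neq_v test_vector_w.
apply: le_trans (_ : _ <= wt_w + ((N - 2) * (base_num / (N + 1)) + kappa N * T + wt_w * 1)) _.
  rewrite lerD2l.
  apply: le_trans (_ : _ <= \sum_(i | (i != v) && (i != w))
      (base_num / (N + 1) + kappa N * (d i - 1) + wt_w * (adj_w i * (N + 2 - d i)^-1))) _.
    apply: ler_sum => i /andP[iv iw]; rewrite mulrA; exact: test_vector_le_linear.
  rewrite !big_split /=; apply: lerD; first apply: lerD.
  - have -> : \sum_(i | (i != v) && (i != w)) base_num / (N + 1)
        = (n - 2)%:R * (base_num / (N + 1)).
      by rewrite sumr_const card_neq2 1?eq_sym // mulr_natl.
    by rewrite natr_subn2.
  - rewrite -mulr_sumr; apply: ler_wpM2l => //.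
    apply: le_trans (_ : _ <= \sum_(i | (i != v) && (i != w)) d i) _.
      by apply: ler_sum => i _; lra.
    by apply: ler_sum_subpred => [i /andP[]|i _]; rewrite ?ler0n.
  - rewrite -mulr_sumr; apply: ler_wpM2l; first exact: ltW.
    exact: le_trans sum_adj_w_inv_denom sum_inv_denom_nbrs_w.
have T0 : 0 <= T by apply: sumr_ge0 => i _; exact: ler0n.
have : 37 * T <= (N - 1) * (2 * N + 395).
  have := sum_deg_le_quadratic e_sym e_irr v_dom codeg.
  by rewrite -(ler_nat R) natrM natr_sum natrM natrD natr_predn natrM.
by move/(dom_row_ineq NL T0); lra.
Qed.

Lemma colsum_le j :
  \sum_i signless_laplacian R e i j * test_vector i <= (n + 2)%:R * test_vector j.
Proof.
have NL := N_large; rewrite signless_laplacian_colsum // natrD.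
have [->|jv] := eqVneq j v.
  rewrite (deg_dom e_irr v_dom) natr_predn test_vector_v !mulr1.
  have -> : \sum_(i | e v i) test_vector i = \sum_(i | i != v) test_vector i.
    by apply: eq_bigl => i; have [->|/v_dom] := eqVneq i v; rewrite ?e_irr.
  by have := row_dom; lra.
rewrite sum_nbrs_split // test_vector_v.
have [->|jw] := eqVneq j w; first by rewrite test_vector_w; have := row_max; lra.
have [_ d2 _] := deg_other_bounds jv jw.
have := row_other jv jw; rewrite test_vector_other //.
have -> : (N + 2) * (entry_num j / (N + 2 - d j))
    = d j * (entry_num j / (N + 2 - d j)) + entry_num j by field; lra.
lra.
Qed.

Lemma q_index_le : q_index R e <= (n + 2)%:R.
Proof.
apply: sup_le_of_ub => [|a /= eig]; first exact: ler0n.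
apply: eigenvalue_le_colsum _ test_vector_gt0 colsum_le eig => i j.
by rewrite mxE; case: (i == j); exact: ler0n.
Qed.

End TestVector.

Lemma q_index_le_dominating (R : realType) n (e : rel 'I_n) (v : 'I_n) :
  symmetric e -> irreflexive e -> (forall u, u != v -> e v u) ->
  (forall u w, u != v -> w != v -> u != w -> (#|common_nbrs e u w| <= 3)%N) ->
  (1186 <= n)%N -> (forall u, u != v -> (deg e u <= n - 2)%N) ->
  (q_index R e <= (n + 2)%:R)%R.
Proof.
move=> e_sym e_irr v_dom codeg n_large deg_le.
have [u0 u0v] : exists u0, u0 != v.
  have : (0 < #|[pred u | u != v]|)%N by rewrite card_neq; lia.
  by case/card_gt0P => u0; rewrite inE; exists u0.
have [w wv w_max] := @arg_maxnP _ u0 (fun u => u != v) (deg e) u0v.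
exact: q_index_le e_sym e_irr v_dom codeg n_large wv w_max (deg_le w wv).
Qed.

Unset Implicit Arguments.

Theorem lemma4p3 (R : realType) (n : nat) (e : rel 'I_n)
  (Hsym : symmetric e) (Hirr : irreflexive e)
  (Hmax : edge_maximal_K33_minor_free (@Graph n e))
  (Hn : (1186 <= n)%N)
  (HDelta : Delta e = n.-1)
  (HDelta' : forall v : 'I_n, deg e v = Delta e ->
               forall u : 'I_n, u != v -> (deg e u <= n - 2)%N) :
  (q_index R e <= (n + 2)%:R)%R.
Proof.
have [v dv] : {v : 'I_n | Delta e = deg e v} by apply: bigop.eq_bigmax; rewrite card_ord; lia.
have v_dom := adj_of_deg_predn Hirr (etrans (esym dv) HDelta).
have codeg := K33_free_common_nbrs Hsym Hirr v_dom Hmax.1.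
exact: q_index_le_dominating Hsym Hirr v_dom codeg Hn (HDelta' v (esym dv)).
Qed.
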